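(* Let $s_0\in(0,1)$, $\tau,\eta,\lambda>0$, and let $(I_j^0)_{j\in\mathbb{Z}}$ be a finitely supported sequence with $I_j^0\in[0,1)$ for all $j$ and $I_j^0>0$ for at least one $j$. Let $f(v):=s_0(1-e^{-\tau v})-\eta v$ and let $(\mathcal{I}_j^\infty)_{j\in\mathbb{Z}}$ be the unique positive, bounded solution of $$0=f(\mathcal{I}_j)+I_j^0+\lambda\left(\mathcal{I}_{j-1}-2\mathcal{I}_j+\mathcal{I}_{j+1}\right),\qquad j\in\mathbb{Z}.$$ Let $(\mathcal{I}_j(t))_{j\in\mathbb{Z}}$ be the solution of $$\mathcal{I}_j'(t)=f(\mathcal{I}_j(t))+I_j^0+\lambda\left(\mathcal{I}_{j-1}(t)-2\mathcal{I}_j(t)+\mathcal{I}_{j+1}(t)\right),\qquad j\in\mathbb{Z},\ t>0,$$ starting from some nonnegative, bounded, compactly (finitely) supported initial condition. Then $(\mathcal{I}_j(t))_{j\in\mathbb{Z}}$ converges to $(\mathcal{I}_j^\infty)_{j\in\mathbb{Z}}$ locally uniformly in $j$ as $t\to+\infty$.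
   Context: Existence and uniqueness of the positive bounded stationary solution $(\mathcal{I}_j^\infty)$ is part of the setting (it is a separate result of the paper). *)

From Stdlib Require Import Reals ZArith.
Open Scope R_scope.

Definition freact (s0 tau eta v : R) : R := s0 * (1 - exp (- tau * v)) - eta * v.

Definition dlap (u : Z -> R) (j : Z) : R :=
  u (j - 1)%Z - 2 * u j + u (j + 1)%Z.

Definition rhs (s0 tau eta lambda : R) (I0 u : Z -> R) (j : Z) : R :=
  freact s0 tau eta (u j) + I0 j + lambda * dlap u j.

Definition bounded_seq (u : Z -> R) : Prop :=
  exists M, forall j, Rabs (u j) <= M.

Definition finitely_supported (u : Z -> R) : Prop :=
  exists N : Z, forall j, (N < Z.abs j)%Z -> u j = 0.

Definition pos_bdd_stationary (s0 tau eta lambda : R) (I0 v : Z -> R) : Prop :=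
  (forall j, 0 < v j) /\ bounded_seq v /\
  (forall j, rhs s0 tau eta lambda I0 v j = 0).

Definition is_solution (s0 tau eta lambda : R) (I0 u0 : Z -> R)
    (I : R -> Z -> R) : Prop :=
  (forall j, I 0 j = u0 j) /\
  (forall j eps, 0 < eps -> exists delta, 0 < delta /\
       forall t, 0 <= t < delta -> Rabs (I t j - u0 j) < eps) /\
  (forall j t, 0 < t ->
       derivable_pt_lim (fun s => I s j) t (rhs s0 tau eta lambda I0 (I t) j)) /\
  (forall T, 0 <= T -> exists M, forall t j, 0 <= t <= T -> Rabs (I t j) <= M).

(* Let M be so large that s0 + 1 <= eta M and u0 <= M.  The solutions U and V starting
   from 0 and from M exist and stay in [0, M]: truncating the right-hand side to [0, M] makes
   it bounded and Lipschitz for the sup norm, so Picard iteration yields a global solution,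
   and a comparison argument shows that the truncation is never active.  Since the reaction
   is one-sided Lipschitz on bounded sets, a Kamke-type comparison principle holds on the
   infinite lattice; it gives U <= I <= V, and comparing U and V with their time shifts shows
   that U is nondecreasing and V nonincreasing.  Their pointwise limits are bounded stationary
   solutions, positive by the strong maximum principle since I0 is nonzero somewhere, hence
   both equal the stationary solution by uniqueness, and I is squeezed between them. *)

From Stdlib Require Import Reals ZArith Lra Lia.
From Stdlib Require Import Classical_Prop IndefiniteDescription.
From Coquelicot Require Import Coquelicot.
Open Scope R_scope.

Lemma mean_value_open (f f' : R -> R) a b : a < b ->
  (forall c, a <= c <= b -> continuity_pt f c) ->
  (forall c, a < c < b -> derivable_pt_lim f c (f' c)) ->
  exists c, a < c < b /\ f b - f a = f' c * (b - a).
Proof.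
  intros Hab Hcont Hder.
  pose (df := fun c (Hc : a < c < b) =>
    exist (fun l => derivable_pt_abs f c l) (f' c) (Hder c Hc)).
  pose (did := fun c (_ : a < c < b) => derivable_pt_id c).
  destruct (MVT f id a b df did Hab Hcont
              (fun c _ => derivable_continuous_pt _ _ (derivable_pt_id c)))
    as [c [Hc Heq]].
  exists c; split; [exact Hc|].
  rewrite derive_pt_id in Heq; unfold id in Heq; simpl in Heq; lra.
Qed.

Lemma continuity_pt_eps (f : R -> R) x : continuity_pt f x ->
  forall eps, 0 < eps ->
  exists d, 0 < d /\ forall y, Rabs (y - x) < d -> Rabs (f y - f x) < eps.
Proof.
  intros Hf eps Heps; destruct (Hf eps Heps) as [d [Hd Hclose]].
  exists d; split; [exact Hd|]; intros y Hy.
  destruct (Req_dec y x) as [->|Hyx]; [rewrite Rminus_diag, Rabs_R0; lra|].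
  apply (Hclose y); split; [split; [exact I|congruence]|exact Hy].
Qed.

Lemma eps_continuity_pt (f : R -> R) x :
  (forall eps, 0 < eps ->
     exists d, 0 < d /\ forall y, Rabs (y - x) < d -> Rabs (f y - f x) < eps) ->
  continuity_pt f x.
Proof.
  intros Hf eps Heps; destruct (Hf eps Heps) as [d [Hd Hclose]].
  exists d; split; [exact Hd|]; intros y [_ Hy]; exact (Hclose y Hy).
Qed.

Definition right_continuous_at0 (g : R -> R) : Prop :=
  forall eps, 0 < eps ->
    exists delta, 0 < delta /\ forall t, 0 <= t < delta -> Rabs (g t - g 0) < eps.

Lemma continuity_pt_Rmax0 (g : R -> R) s :
  right_continuous_at0 g -> (forall x, 0 < x -> continuity_pt g x) ->
  continuity_pt (fun x => g (Rmax x 0)) s.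
Proof.
  intros Hg0 Hg; apply eps_continuity_pt; intros eps Heps.
  destruct (Rtotal_order s 0) as [Hs|[->|Hs]].
  - exists (- s); split; [lra|]; intros y Hy; apply Rabs_def2 in Hy.
    rewrite !Rmax_right by lra; rewrite Rminus_diag, Rabs_R0; lra.
  - destruct (Hg0 eps Heps) as [d [Hd Hclose]]; exists d; split; [exact Hd|].
    intros y Hy; rewrite Rminus_0_r in Hy; apply Rabs_def2 in Hy.
    rewrite (Rmax_right 0 0) by lra; apply Hclose.
    unfold Rmax; destruct (Rle_dec y 0); lra.
  - destruct (continuity_pt_eps g s (Hg s Hs) eps Heps) as [d [Hd Hclose]].
    exists (Rmin d s); split; [apply Rmin_glb_lt; lra|]; intros y Hy.
    pose proof (Rmin_l d s); pose proof (Rmin_r d s); apply Rabs_def2 in Hy.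
    rewrite !Rmax_left by lra; apply Hclose, Rabs_def1; lra.
Qed.

Lemma derivable_pt_lim_Rmax0 (g : R -> R) s l : 0 < s ->
  derivable_pt_lim g s l -> derivable_pt_lim (fun x => g (Rmax x 0)) s l.
Proof.
  intros Hs Hg eps Heps; destruct (Hg eps Heps) as [d Hd].
  assert (Hds : 0 < Rmin d s) by (apply Rmin_glb_lt; [apply cond_pos|lra]).
  exists (mkposreal _ Hds); intros h Hh Hhd; simpl in Hhd.
  pose proof (Rmin_l d s); pose proof (Rmin_r d s); apply Rabs_def2 in Hhd.
  rewrite !Rmax_left by lra; apply Hd; [exact Hh|]; apply Rabs_def1; lra.
Qed.

(* At the last point [s] of [[a, t]] where [phi <= 0] we have [phi s <= 0] by continuity,
   and [phi > 0] on [(s, t]], so the mean value theorem on [[s, t]] applies. *)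
Lemma le_slope_after_last_nonpos (phi phi' : R -> R) a t C :
  a <= t -> phi a <= 0 -> 0 <= C ->
  (forall s, a <= s <= t -> continuity_pt phi s) ->
  (forall s, a < s <= t -> derivable_pt_lim phi s (phi' s)) ->
  (forall s, a < s <= t -> 0 < phi s -> phi' s <= C) ->
  phi t <= C * (t - a).
Proof.
  intros Hat Ha HC Hcont Hder Hslope.
  set (A := fun s => a <= s <= t /\ phi s <= 0).
  destruct (completeness A) as [s [Hub Hlub]].
  { exists t; intros x [Hx _]; lra. }
  { exists a; split; [lra|exact Ha]. }
  assert (Has : a <= s) by (apply Hub; split; [lra|exact Ha]).
  assert (Hst : s <= t) by (apply Hlub; intros x [Hx _]; lra).
  assert (Hphis : phi s <= 0).
  { destruct (Rle_dec (phi s) 0) as [Hle|Hgt]; [exact Hle|exfalso].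
    destruct (continuity_pt_eps phi s (Hcont s (conj Has Hst)) (phi s))
      as [d [Hd Hclose]]; [lra|].
    assert (Hbelow : is_upper_bound A (Rmax a (s - d / 2))).
    { intros x [Hx Hphix].
      assert (Hxs : x <= s) by (apply Hub; split; assumption).
      destruct (Rle_dec x (Rmax a (s - d / 2))) as [Hle|Hgt']; [exact Hle|exfalso].
      pose proof (Rmax_r a (s - d / 2)).
      assert (Hxd : Rabs (x - s) < d) by (apply Rabs_def1; lra).
      specialize (Hclose x Hxd); apply Rabs_def2 in Hclose; lra. }
    specialize (Hlub _ Hbelow); unfold Rmax in Hlub.
    destruct (Rle_dec a (s - d / 2)); [lra|].
    assert (s = a) by lra; subst s; lra. }
  destruct (Req_dec s t) as [<-|Hneq]; [nra|].
  destruct (mean_value_open phi phi' s t) as [c [Hc Heq]].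
  - lra.
  - intros c Hc; apply Hcont; lra.
  - intros c Hc; apply Hder; lra.
  - assert (Hphic : 0 < phi c).
    { destruct (Rlt_dec 0 (phi c)) as [Hlt|Hle]; [exact Hlt|exfalso].
      assert (c <= s) by (apply Hub; split; lra); lra. }
    assert (phi' c <= C) by (apply Hslope; [lra|exact Hphic]).
    nra.
Qed.

Section ComparisonPrinciple.

Variable J : Type.
Variables (W D : R -> J -> R) (K T : R).
Hypothesis K_pos : 0 < K.
Hypothesis W_continuous : forall j s, continuity_pt (fun x => W x j) s.
Hypothesis W_derivative :
  forall j s, 0 < s -> derivable_pt_lim (fun x => W x j) s (D s j).
Hypothesis W_bounded_above : exists Rb, forall t j, 0 <= t <= T -> W t j <= Rb.
Hypothesis W_kamke : forall t j b, 0 < t <= T -> 0 <= b ->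
  (forall k, W t k <= b) -> 0 < W t j -> D t j <= K * b.

(* With [S] the supremum of [W^+] over the window, [W <= K S (t - a) <= S / 2], so [S = 0]. *)
Lemma nonpos_on_window a : 0 <= a -> (forall j, W a j <= 0) ->
  forall t j, a <= t <= Rmin T (a + / (2 * K)) -> W t j <= 0.
Proof.
  intros Ha Hza.
  destruct W_bounded_above as [Rb HRb].
  set (h := / (2 * K)); set (Tw := Rmin T (a + h)).
  assert (Hh : 0 < h) by (apply Rinv_0_lt_compat; lra).
  assert (HKh : K * h = / 2) by (unfold h; field; lra).
  assert (HTw : Tw <= T /\ Tw <= a + h) by (split; [apply Rmin_l|apply Rmin_r]).
  set (E := fun x => x = 0 \/ exists s k, a <= s <= Tw /\ x = W s k).
  destruct (completeness E) as [S [Hub Hlub]].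
  { exists (Rmax Rb 0); intros x [->|[s [k [Hs ->]]]]; [apply Rmax_r|].
    apply Rle_trans with Rb; [apply HRb; lra|apply Rmax_l]. }
  { exists 0; left; reflexivity. }
  assert (HS : 0 <= S) by (apply Hub; left; reflexivity).
  assert (Hhalf : forall s k, a <= s <= Tw -> W s k <= S / 2).
  { intros s k Hs.
    assert (Hlin : W s k <= K * S * (s - a)).
    { apply (le_slope_after_last_nonpos (fun x => W x k) (fun x => D x k)).
      - lra.
      - apply Hza.
      - apply Rmult_le_pos; lra.
      - intros; apply W_continuous.
      - intros s' Hs'; apply W_derivative; lra.
      - intros s' Hs' Hpos; apply W_kamke; [lra|exact HS| |exact Hpos].
        intros k'; apply Hub; right; exists s', k'; split; [lra|reflexivity]. }
    assert (K * S * (s - a) <= K * S * h) by (apply Rmult_le_compat_l; nra).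
    replace (K * S * h) with (S * (K * h)) in H by ring; rewrite HKh in H; lra. }
  assert (HS0 : S <= S / 2).
  { apply Hlub; intros x [->|[s [k [Hs ->]]]]; [lra|exact (Hhalf s k Hs)]. }
  intros t j Ht; specialize (Hhalf t j Ht); lra.
Qed.

Lemma nonpos_from_initial_nonpos :
  (forall j, W 0 j <= 0) -> forall t j, 0 <= t <= T -> W t j <= 0.
Proof.
  intros Hz0; set (h := / (2 * K)).
  assert (Hh : 0 < h) by (apply Rinv_0_lt_compat; lra).
  assert (Hsteps : forall n t j, 0 <= t <= T -> t <= INR n * h -> W t j <= 0).
  { induction n as [|n IH]; intros t j Ht Htn.
    - simpl in Htn; replace t with 0 by lra; apply Hz0.
    - rewrite S_INR in Htn.
      destruct (Rle_dec t (INR n * h)) as [Hle|Hgt]; [exact (IH t j Ht Hle)|].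
      assert (0 <= INR n * h) by (apply Rmult_le_pos; [apply pos_INR|lra]).
      apply (nonpos_on_window (INR n * h)); [lra| |].
      + intros k; apply IH; lra.
      + split; [lra|apply Rmin_glb; unfold h in *; lra]. }
  intros t j Ht.
  destruct (INR_unbounded (t / h)) as [n Hn].
  apply (Hsteps n t j Ht).
  apply (Rmult_lt_compat_r h) in Hn; [|exact Hh].
  unfold Rdiv in Hn; rewrite Rmult_assoc, Rinv_l in Hn; lra.
Qed.

End ComparisonPrinciple.

Lemma comparison_principle (J : Type) (w D : R -> J -> R) K T :
  0 < K -> (forall j, w 0 j <= 0) ->
  (forall j, right_continuous_at0 (fun t => w t j)) ->
  (forall j s, 0 < s -> derivable_pt_lim (fun x => w x j) s (D s j)) ->
  (exists Rb, forall t j, 0 <= t <= T -> w t j <= Rb) ->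
  (forall t j b, 0 < t <= T -> 0 <= b ->
     (forall k, w t k <= b) -> 0 < w t j -> D t j <= K * b) ->
  forall t j, 0 <= t <= T -> w t j <= 0.
Proof.
  intros HK Hw0 Hrc Hder [Rb HRb] Hkamke t j Ht.
  rewrite <- (Rmax_left t 0) by lra.
  apply (nonpos_from_initial_nonpos J (fun t j => w (Rmax t 0) j) D K T HK); cbv beta.
  - intros k s; apply (continuity_pt_Rmax0 (fun x => w x k)); [apply Hrc|].
    intros x Hx; apply derivable_continuous_pt; exists (D x k); now apply Hder.
  - intros k s Hs; now apply (derivable_pt_lim_Rmax0 (fun x => w x k)), Hder.
  - exists Rb; intros t' k Ht'; rewrite Rmax_left by lra; auto.
  - intros t' k b Ht' Hb Hall Hpos; rewrite Rmax_left in Hpos by lra.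
    apply Hkamke; auto; intros k'; specialize (Hall k').
    rewrite Rmax_left in Hall by lra; exact Hall.
  - intros k; rewrite Rmax_left by lra; apply Hw0.
  - lra.
Qed.

Lemma lipschitz_continuous (g : R -> R) c x : 0 <= c ->
  (forall t s, Rabs (g t - g s) <= c * Rabs (t - s)) -> continuous g x.
Proof.
  intros Hc Hg; apply continuity_pt_filterlim, eps_continuity_pt; intros eps Heps.
  exists (eps / (c + 1)); split; [apply Rdiv_lt_0_compat; lra|]; intros y Hy.
  apply Rle_lt_trans with ((c + 1) * Rabs (y - x)).
  - apply Rle_trans with (c * Rabs (y - x)); [apply Hg|].
    pose proof (Rabs_pos (y - x)); nra.
  - apply (Rmult_lt_compat_l (c + 1)) in Hy; [|lra].
    replace ((c + 1) * (eps / (c + 1))) with eps in Hy by (field; lra); exact Hy.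
Qed.

Lemma ex_RInt_continuous_R (g : R -> R) a b :
  (forall x, continuous g x) -> ex_RInt g a b.
Proof. intros Hg; apply (@ex_RInt_continuous R_CompleteNormedModule); intros; apply Hg. Qed.

Lemma RInt_lipschitz (g : R -> R) B t s :
  (forall x, continuous g x) -> (forall x, Rabs (g x) <= B) ->
  Rabs (RInt g 0 t - RInt g 0 s) <= B * Rabs (t - s).
Proof.
  intros Hg HB.
  assert (Hchasles : RInt g 0 t = RInt g 0 s + RInt g s t :> R).
  { symmetry; apply (RInt_Chasles g 0 s t); now apply ex_RInt_continuous_R. }
  rewrite Hchasles, Rplus_minus_l, Rmult_comm.
  apply (norm_RInt_le_const_abs g s t); [intros; apply HB|].
  now apply (@RInt_correct R_CompleteNormedModule), ex_RInt_continuous_R.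
Qed.

Lemma abs_RInt_le_pow (g : R -> R) c n t : 0 <= t ->
  (forall x, continuous g x) -> (forall s, 0 <= s <= t -> Rabs (g s) <= c * s ^ n) ->
  Rabs (RInt g 0 t) <= c * (t ^ S n / INR (S n)).
Proof.
  intros Ht Hg Hbound.
  apply (norm_RInt_le g (fun s => c * s ^ n) 0 t); [exact Ht|exact Hbound| |].
  - now apply (@RInt_correct R_CompleteNormedModule), ex_RInt_continuous_R.
  - replace (t ^ S n / INR (S n)) with (t ^ S n / INR (S n) - 0 ^ S n / INR (S n))
      by (rewrite pow_i by lia; unfold Rdiv; ring).
    apply (is_RInt_scal (fun s => s ^ n)), is_RInt_pow.
Qed.

Lemma Rabs_le_null_seq_eq0 x (e : nat -> R) :
  (forall n, Rabs x <= e n) -> is_lim_seq e 0 -> x = 0.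
Proof.
  intros Hle He.
  pose proof (is_lim_seq_le (fun _ => Rabs x) e (Rabs x) 0 Hle (is_lim_seq_const _) He)
    as Habs; simpl in Habs.
  destruct (Req_dec x 0) as [->|Hx]; [reflexivity|].
  pose proof (Rabs_pos_lt x Hx); lra.
Qed.

Lemma limit_of_majorized_increments (x c : nat -> R) l :
  is_series c l -> (forall n, Rabs (x (S n) - x n) <= c n) ->
  is_lim_seq x (real (Lim_seq x)) /\
  forall n, Rabs (Lim_seq x - x (S n)) <= l - sum_n c n.
Proof.
  intros Hc Hinc.
  assert (Htelescope : forall n m,
    Rabs (x (m + S n)%nat - x (S n)) <= sum_n c (m + n) - sum_n c n).
  { intros n m; induction m as [|m IH]; simpl.
    - rewrite !Rminus_diag, Rabs_R0; lra.
    - rewrite sum_Sn; unfold plus; simpl.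
      replace (S (m + n)) with (m + S n)%nat by lia.
      specialize (Hinc (m + S n)%nat).
      replace (x (S (m + S n)) - x (S n))
        with ((x (S (m + S n)) - x (m + S n)%nat) + (x (m + S n)%nat - x (S n))) by ring.
      eapply Rle_trans; [apply Rabs_triang|lra]. }
  assert (Hsum : forall n, sum_n (fun k => x (S k) - x k) n = x (S n) - x O).
  { induction n as [|n IH]; [now rewrite sum_O|].
    rewrite sum_Sn, IH; unfold plus; simpl; ring. }
  assert (Hlim : is_lim_seq x (real (Lim_seq x))).
  { apply Lim_seq_correct'.
    destruct (ex_series_le (fun k => x (S k) - x k) c Hinc (ex_intro _ l Hc)) as [d Hd].
    exists (x O + d); apply is_lim_seq_incr_1.
    apply (is_lim_seq_ext (fun n => x O + sum_n (fun k => x (S k) - x k) n)).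
    - intros n; rewrite Hsum; ring.
    - apply is_lim_seq_plus'; [apply is_lim_seq_const|exact Hd]. }
  split; [exact Hlim|]; intros n.
  apply (is_lim_seq_le
    (fun m => Rabs (x (m + S n)%nat - x (S n)))
    (fun m => sum_n c (m + n) - sum_n c n)
    (Rabs (Lim_seq x - x (S n))) (l - sum_n c n)); [exact (Htelescope n)| |].
  - apply (is_lim_seq_abs _ (Lim_seq x - x (S n))).
    apply is_lim_seq_minus'; [|apply is_lim_seq_const].
    now apply (is_lim_seq_incr_n x (S n)).
  - apply is_lim_seq_minus'; [|apply is_lim_seq_const].
    now apply (is_lim_seq_incr_n (sum_n c) n).
Qed.

Section PicardIteration.

Variable J : Type.
Variable G : (J -> R) -> J -> R.
Variables (B L : R) (u0 : J -> R).
Hypothesis B_nonneg : 0 <= B.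
Hypothesis L_nonneg : 0 <= L.
Hypothesis G_bounded : forall u j, Rabs (G u j) <= B.
Hypothesis G_lipschitz : forall u v d j,
  (forall k, Rabs (u k - v k) <= d) -> Rabs (G u j - G v j) <= L * d.

Fixpoint picard (n : nat) : R -> J -> R :=
  match n with
  | O => fun _ => u0
  | S m => fun t j => u0 j + RInt (fun s => G (picard m s) j) 0 t
  end.

Lemma G_continuous_along (w : R -> J -> R) c j x : 0 <= c ->
  (forall k t s, Rabs (w t k - w s k) <= c * Rabs (t - s)) ->
  continuous (fun s => G (w s) j) x.
Proof.
  intros Hc Hw; apply (lipschitz_continuous _ (L * c)); [now apply Rmult_le_pos|].
  intros t s; rewrite Rmult_assoc; apply G_lipschitz; intros k; apply Hw.
Qed.

Lemma picard_lipschitz n j t s :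
  Rabs (picard n t j - picard n s j) <= B * Rabs (t - s).
Proof.
  revert j t s; induction n as [|n IH]; intros j t s; simpl.
  - rewrite Rminus_diag, Rabs_R0; apply Rmult_le_pos; [lra|apply Rabs_pos].
  - rewrite Rminus_plus_l_l; apply RInt_lipschitz; [|intros; apply G_bounded].
    intros x; apply (G_continuous_along _ B); [lra|exact IH].
Qed.

Lemma picard_G_continuous n j x : continuous (fun s => G (picard n s) j) x.
Proof. apply (G_continuous_along _ B); [lra|intros; apply picard_lipschitz]. Qed.

Lemma picard_increment n t j : 0 <= t ->
  Rabs (picard (S n) t j - picard n t j) <= B * L ^ n * (t ^ S n / INR (fact (S n))).
Proof.
  revert t j; induction n as [|n IH]; intros t j Ht.
  - simpl; rewrite Rplus_minus_l.
    replace (B * 1 * (t * 1 / 1)) with (B * (t ^ 1 / INR 1)) by (simpl; field).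
    apply abs_RInt_le_pow; [exact Ht|intros; apply continuous_const|].
    intros s _; rewrite pow_O, Rmult_1_r; apply G_bounded.
  - change (Rabs ((u0 j + RInt (fun s => G (picard (S n) s) j) 0 t)
                  - (u0 j + RInt (fun s => G (picard n s) j) 0 t))
            <= B * L ^ S n * (t ^ S (S n) / INR (fact (S (S n))))).
    rewrite Rminus_plus_l_l.
    rewrite <- (@RInt_minus R_CompleteNormedModule)
      by (apply ex_RInt_continuous_R; intros; apply picard_G_continuous).
    replace (B * L ^ S n * (t ^ S (S n) / INR (fact (S (S n)))))
      with (L * (B * L ^ n / INR (fact (S n))) * (t ^ S (S n) / INR (S (S n)))).
    2:{ change (fact (S (S n))) with (S (S n) * fact (S n))%nat; rewrite mult_INR.
        pose proof (INR_fact_lt_0 (S n)); pose proof (pos_INR (S n)).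
        rewrite (S_INR (S n)); simpl pow; field; lra. }
    apply abs_RInt_le_pow; [exact Ht| |].
    + intros x; apply (continuous_minus (fun s => G (picard (S n) s) j));
        apply picard_G_continuous.
    + intros s Hs; change (Rabs (G (picard (S n) s) j - G (picard n s) j)
        <= L * (B * L ^ n / INR (fact (S n))) * s ^ S n).
      rewrite Rmult_assoc; apply G_lipschitz; intros k.
      replace (B * L ^ n / INR (fact (S n)) * s ^ S n)
        with (B * L ^ n * (s ^ S n / INR (fact (S n)))) by (unfold Rdiv; ring).
      apply IH; lra.
Qed.

Definition picard_majorant (T : R) (n : nat) : R :=
  B * T * ((L * T) ^ n / INR (fact n)).

Lemma picard_increment_le_majorant T n t j : 0 <= t <= T ->
  Rabs (picard (S n) t j - picard n t j) <= picard_majorant T n.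
Proof.
  intros Ht; eapply Rle_trans; [apply picard_increment; lra|]; unfold picard_majorant.
  pose proof (INR_fact_lt_0 n); pose proof (INR_fact_lt_0 (S n)).
  assert (Hfact : INR (fact n) <= INR (fact (S n))) by (apply le_INR; simpl; lia).
  assert (Hpow : t ^ S n <= T ^ S n) by (apply pow_incr; lra).
  assert (HLn : 0 <= L ^ n) by (apply pow_le; lra).
  rewrite Rpow_mult_distr.
  replace (B * T * (L ^ n * T ^ n / INR (fact n)))
    with (B * L ^ n * (T ^ S n / INR (fact n))) by (simpl; field; lra).
  apply Rmult_le_compat_l; [now apply Rmult_le_pos|].
  apply Rle_trans with (T ^ S n / INR (fact (S n))).
  - apply Rmult_le_compat_r; [left; apply Rinv_0_lt_compat|]; lra.
  - apply Rmult_le_compat_l; [apply pow_le; pose proof (pow_le t (S n)); lra|].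
    now apply Rinv_le_contravar.
Qed.

Lemma picard_majorant_series T :
  is_series (picard_majorant T) (B * T * exp (L * T)).
Proof.
  apply (is_series_ext (fun n => scal (B * T) (scal (pow_n (L * T) n) (/ INR (fact n))))).
  - intros n; unfold picard_majorant, scal; simpl; unfold mult; simpl.
    rewrite pow_n_pow; unfold Rdiv; ring.
  - apply (@is_series_scal R_AbsRing R_NormedModule (B * T)), is_exp_Reals.
Qed.

Definition picard_error (T : R) (n : nat) : R :=
  B * T * exp (L * T) - sum_n (picard_majorant T) n.

Lemma picard_error_null T : is_lim_seq (picard_error T) 0.
Proof.
  replace 0 with (B * T * exp (L * T) - B * T * exp (L * T)) by ring.
  apply is_lim_seq_minus'; [apply is_lim_seq_const|apply picard_majorant_series].
Qed.

Definition picard_limit (t : R) (j : J) : R :=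
  Lim_seq (fun n => picard n (Rmax t 0) j).

Lemma picard_limit_spec T t j : 0 <= T -> Rmax t 0 <= T ->
  is_lim_seq (fun n => picard n (Rmax t 0) j) (picard_limit t j) /\
  forall n, Rabs (picard_limit t j - picard (S n) (Rmax t 0) j) <= picard_error T n.
Proof.
  intros HT Ht; unfold picard_limit, picard_error.
  apply (limit_of_majorized_increments (fun n => picard n (Rmax t 0) j) (picard_majorant T)).
  - apply picard_majorant_series.
  - intros n; apply picard_increment_le_majorant; split; [apply Rmax_r|exact Ht].
Qed.

Lemma picard_limit_approx T n t j : 0 <= t <= T ->
  Rabs (picard_limit t j - picard (S n) t j) <= picard_error T n.
Proof.
  intros Ht; rewrite <- (Rmax_left t 0) at 2 by lra.
  apply (picard_limit_spec T); [lra|rewrite Rmax_left; lra].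
Qed.

Lemma picard_limit_lipschitz j t s :
  Rabs (picard_limit t j - picard_limit s j) <= B * Rabs (t - s).
Proof.
  destruct (picard_limit_spec (Rmax t 0) t j) as [Ht _]; [apply Rmax_r|lra|].
  destruct (picard_limit_spec (Rmax s 0) s j) as [Hs _]; [apply Rmax_r|lra|].
  apply (is_lim_seq_le
    (fun n => Rabs (picard n (Rmax t 0) j - picard n (Rmax s 0) j))
    (fun _ => B * Rabs (t - s))
    (Rabs (picard_limit t j - picard_limit s j)) (B * Rabs (t - s))).
  - intros n; eapply Rle_trans; [apply picard_lipschitz|].
    apply Rmult_le_compat_l; [lra|]; apply Rabs_le_between.
    pose proof (Rle_abs (t - s)); pose proof (Rle_abs (- (t - s))); rewrite Rabs_Ropp in *.
    unfold Rmax; destruct (Rle_dec t 0), (Rle_dec s 0); lra.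
  - apply (is_lim_seq_abs _ (picard_limit t j - picard_limit s j)), is_lim_seq_minus';
      assumption.
  - apply is_lim_seq_const.
Qed.

Lemma picard_limit_at0 j : picard_limit 0 j = u0 j.
Proof.
  unfold picard_limit; rewrite (Rmax_left 0 0) by lra.
  rewrite (Lim_seq_ext _ (fun _ => u0 j)); [now rewrite Lim_seq_const|].
  intros [|n]; simpl; [reflexivity|]; rewrite RInt_point; unfold zero; simpl; ring.
Qed.

Lemma picard_limit_G_continuous j x :
  continuous (fun s => G (picard_limit s) j) x.
Proof.
  apply (G_continuous_along _ B); [lra|intros; apply picard_limit_lipschitz].
Qed.

(* Passing to the limit in [picard (S (S n)) = u0 + RInt (G (picard (S n)))], with the
   uniform error bound [picard_error t]. *)
Lemma picard_limit_integral_eq t j : 0 <= t ->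
  picard_limit t j = u0 j + RInt (fun s => G (picard_limit s) j) 0 t.
Proof.
  intros Ht; apply Rminus_diag_uniq.
  apply (Rabs_le_null_seq_eq0 _ (fun n => picard_error t (S n) + t * (L * picard_error t n))).
  - intros n.
    assert (Hint : Rabs (RInt (fun s => G (picard (S n) s) j) 0 t
                         - RInt (fun s => G (picard_limit s) j) 0 t)
                   <= t * (L * picard_error t n)).
    { rewrite <- (@RInt_minus R_CompleteNormedModule); cycle 1.
      - apply ex_RInt_continuous_R; intros; apply picard_G_continuous.
      - apply ex_RInt_continuous_R; intros; apply picard_limit_G_continuous.
      - replace t with (t - 0) at 2 by ring.
        apply abs_RInt_le_const; [exact Ht| |].
        + apply ex_RInt_continuous_R; intros x.
          apply (continuous_minus (fun s => G (picard (S n) s) j));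
            [apply picard_G_continuous|apply picard_limit_G_continuous].
        + intros s Hs; apply G_lipschitz; intros k; rewrite Rabs_minus_sym.
          apply picard_limit_approx; lra. }
    pose proof (picard_limit_approx t (S n) t j (conj Ht (Rle_refl t))) as Happrox.
    change (picard (S (S n)) t j)
      with (u0 j + RInt (fun s => G (picard (S n) s) j) 0 t) in Happrox.
    eapply Rle_trans;
      [apply (R_dist_tri _ _ (u0 j + RInt (fun s => G (picard (S n) s) j) 0 t))|].
    unfold R_dist; rewrite Rminus_plus_l_l; lra.
  - replace 0 with (0 + t * (L * 0)) by ring.
    apply is_lim_seq_plus'.
    + apply (is_lim_seq_incr_1 (picard_error t)), picard_error_null.
    + apply (is_lim_seq_scal_l _ t (L * 0)), (is_lim_seq_scal_l _ L 0), picard_error_null.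
Qed.

Lemma picard_limit_derivative j t : 0 < t ->
  derivable_pt_lim (fun s => picard_limit s j) t (G (picard_limit t) j).
Proof.
  intros Ht; apply is_derive_Reals.
  apply (is_derive_ext_loc (fun s => u0 j + RInt (fun x => G (picard_limit x) j) 0 s)).
  - exists (mkposreal t Ht); intros s Hs; symmetry; apply picard_limit_integral_eq.
    unfold ball in Hs; simpl in Hs; unfold AbsRing_ball, abs, minus, plus, opp in Hs.
    simpl in Hs; apply Rabs_def2 in Hs; lra.
  - rewrite <- (Rplus_0_l (G (picard_limit t) j)).
    apply (is_derive_plus (fun _ => u0 j));
      [apply (@is_derive_const R_AbsRing R_NormedModule)|].
    apply (is_derive_RInt (fun x => G (picard_limit x) j)
             (fun b => RInt (fun x => G (picard_limit x) j) 0 b) 0 t).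
    + apply filter_forall; intros b.
      apply (@RInt_correct R_CompleteNormedModule), ex_RInt_continuous_R; intros.
      apply picard_limit_G_continuous.
    + apply picard_limit_G_continuous.
Qed.

End PicardIteration.

Theorem picard_existence (J : Type) (G : (J -> R) -> J -> R) B L (u0 : J -> R) :
  0 <= B -> 0 <= L -> (forall u j, Rabs (G u j) <= B) ->
  (forall u v d j, (forall k, Rabs (u k - v k) <= d) -> Rabs (G u j - G v j) <= L * d) ->
  exists u : R -> J -> R, (forall j, u 0 j = u0 j) /\
    (forall j t s, Rabs (u t j - u s j) <= B * Rabs (t - s)) /\
    (forall j t, 0 < t -> derivable_pt_lim (fun s => u s j) t (G (u t) j)).
Proof.
  intros HB HL HGb HGl; exists (picard_limit J G u0); split; [|split].
  - intros j; apply picard_limit_at0.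
  - intros j t s; now apply (picard_limit_lipschitz J G B L).
  - intros j t Ht; now apply (picard_limit_derivative J G B L).
Qed.

Lemma exp_le_compat x y : x <= y -> exp x <= exp y.
Proof.
  intros Hxy; destruct (Req_dec x y) as [->|Hne]; [lra|].
  left; apply exp_increasing; lra.
Qed.

Lemma exp_neg_increment tau x y : 0 <= tau -> y <= x ->
  0 <= exp (- tau * y) - exp (- tau * x) <= exp (- tau * y) * (tau * (x - y)).
Proof.
  intros Htau Hyx.
  replace (- tau * x) with (- tau * y + - (tau * (x - y))) by ring; rewrite exp_plus.
  assert (Hz : 0 <= tau * (x - y)) by (apply Rmult_le_pos; lra).
  pose proof (exp_pos (- tau * y)); pose proof (exp_ineq1_le (- (tau * (x - y)))).
  assert (exp (- (tau * (x - y))) <= 1)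
    by (rewrite <- exp_0; apply exp_le_compat; lra).
  split; nra.
Qed.

Lemma freact_0 s0 tau eta : freact s0 tau eta 0 = 0.
Proof. unfold freact; rewrite Rmult_0_r, exp_0; ring. Qed.

Lemma freact_le s0 tau eta x : 0 <= s0 -> freact s0 tau eta x <= s0 - eta * x.
Proof. intros; unfold freact; pose proof (exp_pos (- tau * x)); nra. Qed.

Lemma Rabs_freact_le s0 tau eta M x : 0 <= s0 -> 0 <= tau -> 0 <= eta -> 0 <= x <= M ->
  Rabs (freact s0 tau eta x) <= s0 + eta * M.
Proof.
  intros; unfold freact.
  pose proof (exp_pos (- tau * x)).
  assert (exp (- tau * x) <= 1) by (rewrite <- exp_0; apply exp_le_compat; nra).
  apply Rabs_le; split; nra.
Qed.

Lemma freact_increment_le s0 tau eta m x y :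
  0 <= s0 -> 0 <= tau -> 0 <= eta -> - m <= y <= x ->
  freact s0 tau eta x - freact s0 tau eta y <= s0 * tau * exp (tau * m) * (x - y).
Proof.
  intros Hs0 Htau Heta Hxy; unfold freact.
  destruct (exp_neg_increment tau x y Htau (proj2 Hxy)) as [_ Hinc].
  assert (exp (- tau * y) <= exp (tau * m)) by (apply exp_le_compat; nra).
  assert (exp (- tau * y) * (tau * (x - y)) <= exp (tau * m) * (tau * (x - y)))
    by (apply Rmult_le_compat_r; [apply Rmult_le_pos|]; lra).
  nra.
Qed.

Lemma freact_increment_ge s0 tau eta x y : 0 <= s0 -> 0 <= tau -> y <= x ->
  - eta * (x - y) <= freact s0 tau eta x - freact s0 tau eta y.
Proof.
  intros Hs0 Htau Hyx; unfold freact.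
  destruct (exp_neg_increment tau x y Htau Hyx) as [Hinc _]; nra.
Qed.

Lemma freact_lipschitz s0 tau eta x y : 0 <= s0 -> 0 <= tau -> 0 <= eta ->
  0 <= x -> 0 <= y ->
  Rabs (freact s0 tau eta x - freact s0 tau eta y) <= (s0 * tau + eta) * Rabs (x - y).
Proof.
  intros Hs0 Htau Heta Hx Hy.
  assert (Hst : 0 <= s0 * tau) by now apply Rmult_le_pos.
  assert (Hexp0 : exp (tau * 0) = 1) by (rewrite Rmult_0_r; apply exp_0).
  destruct (Rle_dec y x) as [Hyx|Hxy].
  - pose proof (freact_increment_le s0 tau eta 0 x y Hs0 Htau Heta ltac:(lra)).
    pose proof (freact_increment_ge s0 tau eta x y Hs0 Htau Hyx).
    rewrite Hexp0 in *; rewrite (Rabs_pos_eq (x - y)) by lra; apply Rabs_le; nra.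
  - pose proof (freact_increment_le s0 tau eta 0 y x Hs0 Htau Heta ltac:(lra)).
    pose proof (freact_increment_ge s0 tau eta y x Hs0 Htau ltac:(lra)).
    rewrite Hexp0 in *; rewrite (Rabs_minus_sym x y), (Rabs_pos_eq (y - x)) by lra.
    apply Rabs_le; nra.
Qed.

Lemma rhs_lipschitz_at s0 tau eta lambda I0 (x y : Z -> R) j d :
  0 <= s0 -> 0 <= tau -> 0 <= eta -> 0 <= lambda -> 0 <= x j -> 0 <= y j ->
  Rabs (x (j - 1)%Z - y (j - 1)%Z) <= d -> Rabs (x j - y j) <= d ->
  Rabs (x (j + 1)%Z - y (j + 1)%Z) <= d ->
  Rabs (rhs s0 tau eta lambda I0 x j - rhs s0 tau eta lambda I0 y j)
    <= (s0 * tau + eta + 4 * lambda) * d.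
Proof.
  intros Hs0 Htau Heta Hlam Hx Hy Hl Hj Hr; unfold rhs, dlap.
  assert (Hst : 0 <= s0 * tau) by now apply Rmult_le_pos.
  pose proof (freact_lipschitz s0 tau eta (x j) (y j) Hs0 Htau Heta Hx Hy) as Hf.
  apply Rabs_le_between in Hl; apply Rabs_le_between in Hr.
  pose proof (Rabs_pos (x j - y j)); apply Rabs_le_between in Hj.
  assert (Hf' : Rabs (freact s0 tau eta (x j) - freact s0 tau eta (y j))
                <= (s0 * tau + eta) * d).
  { eapply Rle_trans; [exact Hf|]; apply Rmult_le_compat_l; [lra|].
    apply Rabs_le_between; lra. }
  apply Rabs_le_between in Hf'; apply Rabs_le_between; split; nra.
Qed.

Definition clamp (M x : R) : R := Rmin (Rmax x 0) M.

Lemma clamp_cases M x : 0 <= M ->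
  (x <= 0 /\ clamp M x = 0) \/ (0 <= x <= M /\ clamp M x = x) \/
  (M <= x /\ clamp M x = M).
Proof.
  intros HM; unfold clamp; destruct (Rle_dec x 0) as [Hx0|Hx0].
  - rewrite Rmax_right, Rmin_left by lra; left; split; [exact Hx0|reflexivity].
  - rewrite Rmax_left by lra; destruct (Rle_dec x M) as [HxM|HxM].
    + rewrite Rmin_left by lra; right; left; split; [lra|reflexivity].
    + rewrite Rmin_right by lra; right; right; split; [lra|reflexivity].
Qed.

Lemma clamp_range M x : 0 <= M -> 0 <= clamp M x <= M.
Proof. intros HM; destruct (clamp_cases M x HM) as [[? ->]|[[? ->]|[? ->]]]; lra. Qed.

Lemma clamp_lipschitz M x y : 0 <= M -> Rabs (clamp M x - clamp M y) <= Rabs (x - y).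
Proof.
  intros HM; pose proof (Rle_abs (x - y)); pose proof (Rle_abs (- (x - y))).
  rewrite Rabs_Ropp in *; apply Rabs_le.
  destruct (clamp_cases M x HM) as [[? ->]|[[? ->]|[? ->]]];
  destruct (clamp_cases M y HM) as [[? ->]|[[? ->]|[? ->]]]; lra.
Qed.

Lemma clamp_id M x : 0 <= x <= M -> clamp M x = x.
Proof. intros Hx; destruct (clamp_cases M x ltac:(lra)) as [[? ->]|[[? ->]|[? ->]]]; lra. Qed.

Definition clamped_rhs s0 tau eta lambda (I0 : Z -> R) M (u : Z -> R) : Z -> R :=
  rhs s0 tau eta lambda I0 (fun k => clamp M (u k)).

Lemma clamped_rhs_bounded s0 tau eta lambda I0 M u j :
  0 <= s0 -> 0 <= tau -> 0 <= eta -> 0 <= lambda -> 0 <= M -> 0 <= I0 j <= 1 ->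
  Rabs (clamped_rhs s0 tau eta lambda I0 M u j) <= s0 + eta * M + 1 + 4 * lambda * M.
Proof.
  intros Hs0 Htau Heta Hlam HM HI0; unfold clamped_rhs, rhs, dlap.
  pose proof (clamp_range M (u (j - 1)%Z) HM); pose proof (clamp_range M (u j) HM).
  pose proof (clamp_range M (u (j + 1)%Z) HM).
  pose proof (Rabs_freact_le s0 tau eta M (clamp M (u j)) Hs0 Htau Heta
                (clamp_range M (u j) HM)) as Hf.
  apply Rabs_le_between in Hf; apply Rabs_le_between; split; nra.
Qed.

Lemma clamped_rhs_lipschitz s0 tau eta lambda I0 M u v d j :
  0 <= s0 -> 0 <= tau -> 0 <= eta -> 0 <= lambda -> 0 <= M ->
  (forall k, Rabs (u k - v k) <= d) ->
  Rabs (clamped_rhs s0 tau eta lambda I0 M u j - clamped_rhs s0 tau eta lambda I0 M v j)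
    <= (s0 * tau + eta + 4 * lambda) * d.
Proof.
  intros Hs0 Htau Heta Hlam HM Hd.
  assert (Hc : forall k, Rabs (clamp M (u k) - clamp M (v k)) <= d)
    by (intros k; eapply Rle_trans; [apply clamp_lipschitz|apply Hd]; exact HM).
  apply rhs_lipschitz_at; auto; apply clamp_range, HM.
Qed.

Lemma lipschitz_right_continuous_at0 (g : R -> R) B : 0 <= B ->
  (forall t s, Rabs (g t - g s) <= B * Rabs (t - s)) -> right_continuous_at0 g.
Proof.
  intros HB Hg eps Heps; exists (eps / (B + 1)); split; [apply Rdiv_lt_0_compat; lra|].
  intros t Ht; eapply Rle_lt_trans; [apply Hg|].
  rewrite Rminus_0_r, Rabs_pos_eq by lra.
  apply Rle_lt_trans with ((B + 1) * t); [nra|].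
  replace eps with ((B + 1) * (eps / (B + 1))) by (field; lra).
  apply Rmult_lt_compat_l; lra.
Qed.

Section ClampedSolution.

Variables (s0 tau eta lambda M B : R) (I0 : Z -> R) (u : R -> Z -> R).
Hypothesis lambda_nonneg : 0 <= lambda.
Hypothesis M_nonneg : 0 <= M.
Hypothesis B_nonneg : 0 <= B.
Hypothesis u_lipschitz : forall j t s, Rabs (u t j - u s j) <= B * Rabs (t - s).
Hypothesis u_derivative : forall j t, 0 < t ->
  derivable_pt_lim (fun s => u s j) t (clamped_rhs s0 tau eta lambda I0 M (u t) j).

Lemma clamped_solution_drift t j : 0 <= t -> Rabs (u t j - u 0 j) <= B * t.
Proof.
  intros Ht; pose proof (u_lipschitz j t 0) as Hlip.
  rewrite Rminus_0_r, (Rabs_pos_eq t) in Hlip by exact Ht; exact Hlip.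
Qed.

(* Where [u] is negative its clamped value is [0], and [f(0) + I0 + lambda (...) >= 0]. *)
Lemma clamped_solution_nonneg : (forall j, 0 <= I0 j) -> (forall j, 0 <= u 0 j) ->
  forall t j, 0 <= t -> 0 <= u t j.
Proof.
  intros HI0 Hu0 t j Ht.
  enough (- u t j <= 0) by lra.
  apply (comparison_principle Z (fun t j => - u t j)
           (fun t j => - clamped_rhs s0 tau eta lambda I0 M (u t) j) 1 t); try lra.
  - intros k; specialize (Hu0 k); lra.
  - intros k; apply (lipschitz_right_continuous_at0 _ B B_nonneg); intros t' s.
    replace (- u t' k - - u s k) with (- (u t' k - u s k)) by ring.
    rewrite Rabs_Ropp; apply u_lipschitz.
  - intros k s Hs; apply (derivable_pt_lim_opp (fun x => u x k)), u_derivative, Hs.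
  - exists (B * t); intros t' k Ht'.
    pose proof (clamped_solution_drift t' k ltac:(lra)) as Hd; apply Rabs_le_between in Hd.
    specialize (Hu0 k); assert (B * t' <= B * t) by (apply Rmult_le_compat_l; lra); lra.
  - intros t' k b Ht' Hb _ Hneg; unfold clamped_rhs, rhs, dlap; cbv beta.
    destruct (clamp_cases M (u t' k) M_nonneg) as [[_ ->]|[[? _]|[? _]]]; try lra.
    rewrite freact_0.
    pose proof (clamp_range M (u t' (k - 1)%Z) M_nonneg).
    pose proof (clamp_range M (u t' (k + 1)%Z) M_nonneg).
    specialize (HI0 k); nra.
Qed.

(* Where [u > M] its clamped value is [M], and
   [f(M) + I0 + lambda (...) <= s0 + 1 - eta M <= 0]. *)
Lemma clamped_solution_le_M : 0 <= s0 -> s0 + 1 <= eta * M -> (forall j, I0 j <= 1) ->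
  (forall j, u 0 j <= M) -> forall t j, 0 <= t -> u t j <= M.
Proof.
  intros Hs0 HM HI0 Hu0 t j Ht.
  enough (u t j - M <= 0) by lra.
  apply (comparison_principle Z (fun t j => u t j - M)
           (fun t j => clamped_rhs s0 tau eta lambda I0 M (u t) j) 1 t); try lra.
  - intros k; specialize (Hu0 k); lra.
  - intros k; apply (lipschitz_right_continuous_at0 _ B B_nonneg); intros t' s.
    replace (u t' k - M - (u s k - M)) with (u t' k - u s k) by ring; apply u_lipschitz.
  - intros k s Hs; rewrite <- (Rminus_0_r (clamped_rhs _ _ _ _ _ _ _ _)).
    apply (derivable_pt_lim_minus (fun x => u x k) (fun _ => M));
      [apply u_derivative, Hs|apply derivable_pt_lim_const].
  - exists (B * t); intros t' k Ht'.
    pose proof (clamped_solution_drift t' k ltac:(lra)) as Hd; apply Rabs_le_between in Hd.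
    specialize (Hu0 k); assert (B * t' <= B * t) by (apply Rmult_le_compat_l; lra); lra.
  - intros t' k b Ht' Hb _ Hbig; unfold clamped_rhs, rhs, dlap; cbv beta.
    destruct (clamp_cases M (u t' k) M_nonneg) as [[? _]|[[? _]|[_ ->]]]; try lra.
    pose proof (freact_le s0 tau eta M Hs0).
    pose proof (clamp_range M (u t' (k - 1)%Z) M_nonneg).
    pose proof (clamp_range M (u t' (k + 1)%Z) M_nonneg).
    specialize (HI0 k); nra.
Qed.

End ClampedSolution.

Lemma solution_in_box s0 tau eta lambda I0 M u0 :
  0 <= s0 -> 0 <= tau -> 0 <= eta -> 0 <= lambda -> (forall j, 0 <= I0 j <= 1) ->
  0 <= M -> s0 + 1 <= eta * M -> (forall j, 0 <= u0 j <= M) ->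
  exists u, is_solution s0 tau eta lambda I0 u0 u /\
            forall t j, 0 <= t -> 0 <= u t j <= M.
Proof.
  intros Hs0 Htau Heta Hlam HI0 HM HsM Hu0.
  set (B := s0 + eta * M + 1 + 4 * lambda * M).
  assert (HB : 0 <= B) by (unfold B; nra).
  destruct (picard_existence Z (clamped_rhs s0 tau eta lambda I0 M) B
              (s0 * tau + eta + 4 * lambda) u0 HB ltac:(nra))
    as [u [Hinit [Hlip Hder]]].
  { intros v j; now apply clamped_rhs_bounded. }
  { intros v w d j Hd; now apply clamped_rhs_lipschitz. }
  assert (Hbox : forall t j, 0 <= t -> 0 <= u t j <= M).
  { intros t j Ht; split.
    - apply (clamped_solution_nonneg s0 tau eta lambda M B I0 u); auto.
      + intros k; apply HI0.
      + intros k; rewrite Hinit; apply Hu0.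
    - apply (clamped_solution_le_M s0 tau eta lambda M B I0 u); auto.
      + intros k; apply HI0.
      + intros k; rewrite Hinit; apply Hu0. }
  exists u; split; [|exact Hbox]; split; [exact Hinit|split; [|split]].
  - intros j; rewrite <- (Hinit j).
    exact (lipschitz_right_continuous_at0 (fun t => u t j) B HB (Hlip j)).
  - intros j t Ht.
    replace (rhs s0 tau eta lambda I0 (u t) j)
      with (clamped_rhs s0 tau eta lambda I0 M (u t) j) by
      (unfold clamped_rhs, rhs, dlap; rewrite !clamp_id by (apply Hbox; lra); reflexivity).
    apply Hder, Ht.
  - intros T _; exists M; intros t j Ht.
    specialize (Hbox t j (proj1 Ht)); rewrite Rabs_pos_eq; lra.
Qed.

Lemma right_continuous_at0_minus (f g : R -> R) :
  right_continuous_at0 f -> right_continuous_at0 g ->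
  right_continuous_at0 (fun t => f t - g t).
Proof.
  intros Hf Hg eps Heps.
  destruct (Hf (eps / 2)) as [d1 [Hd1 Hf']]; [lra|].
  destruct (Hg (eps / 2)) as [d2 [Hd2 Hg']]; [lra|].
  exists (Rmin d1 d2); split; [now apply Rmin_glb_lt|]; intros t Ht.
  pose proof (Rmin_l d1 d2); pose proof (Rmin_r d1 d2).
  specialize (Hf' t ltac:(lra)); specialize (Hg' t ltac:(lra)).
  replace (f t - g t - (f 0 - g 0)) with ((f t - f 0) - (g t - g 0)) by ring.
  eapply Rle_lt_trans; [apply Rabs_triang|]; rewrite Rabs_Ropp; lra.
Qed.

Lemma derivable_pt_lim_shift (g : R -> R) h t l :
  derivable_pt_lim g (t + h) l -> derivable_pt_lim (fun s => g (s + h)) t l.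
Proof.
  intros Hg eps Heps; destruct (Hg eps Heps) as [d Hd]; exists d; intros k Hk Hkd.
  replace (t + k + h) with (t + h + k) by ring; now apply Hd.
Qed.

Section LatticeSolutions.

Variables (s0 tau eta lambda : R) (I0 : Z -> R).
Hypotheses (s0_nonneg : 0 <= s0) (tau_nonneg : 0 <= tau) (eta_nonneg : 0 <= eta).
Hypothesis lambda_nonneg : 0 <= lambda.

Lemma is_solution_right_continuous a u : is_solution s0 tau eta lambda I0 a u ->
  forall j, right_continuous_at0 (fun t => u t j).
Proof. intros [Hinit [Hrc _]] j eps Heps; rewrite Hinit; now apply Hrc. Qed.

(* On [-Rb, oo) the reaction is one-sided Lipschitz with constant [s0 tau exp (tau Rb)],
   which gives the Kamke condition for [u - v]. *)
Lemma solution_comparison a b u v :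
  is_solution s0 tau eta lambda I0 a u -> is_solution s0 tau eta lambda I0 b v ->
  (forall j, a j <= b j) -> forall t j, 0 <= t -> u t j <= v t j.
Proof.
  intros Hu Hv Hab t j Ht.
  pose proof (is_solution_right_continuous a u Hu) as Hurc.
  pose proof (is_solution_right_continuous b v Hv) as Hvrc.
  destruct Hu as [Hu0 [_ [Huder Hubd]]]; destruct Hv as [Hv0 [_ [Hvder Hvbd]]].
  destruct (Hubd t Ht) as [Mu HMu]; destruct (Hvbd t Ht) as [Mv HMv].
  set (Rb := Rmax Mu Mv).
  set (E := s0 * tau * exp (tau * Rb)).
  assert (HE : 0 <= E)
    by (apply Rmult_le_pos; [now apply Rmult_le_pos|apply Rlt_le, exp_pos]).
  enough (u t j - v t j <= 0) by lra.
  apply (comparison_principle Z (fun t j => u t j - v t j)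
    (fun t j => rhs s0 tau eta lambda I0 (u t) j - rhs s0 tau eta lambda I0 (v t) j)
    (E + 2 * lambda + 1) t); [lra| | | | | |lra].
  - intros k; rewrite Hu0, Hv0; specialize (Hab k); lra.
  - intros k; apply right_continuous_at0_minus; [apply Hurc|apply Hvrc].
  - intros k s Hs; apply (derivable_pt_lim_minus (fun x => u x k) (fun x => v x k));
      [apply Huder|apply Hvder]; exact Hs.
  - exists (Mu + Mv); intros t' k Ht'.
    pose proof (HMu t' k Ht') as Hu'; pose proof (HMv t' k Ht') as Hv'.
    apply Rabs_le_between in Hu'; apply Rabs_le_between in Hv'; lra.
  - intros t' k c Ht' Hc Hall Hpos; unfold rhs, dlap.
    pose proof (HMv t' k ltac:(lra)) as Hvk; apply Rabs_le_between in Hvk.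
    assert (Mv <= Rb) by apply Rmax_r.
    assert (Hf : freact s0 tau eta (u t' k) - freact s0 tau eta (v t' k)
                 <= E * c).
    { eapply Rle_trans; [apply (freact_increment_le s0 tau eta Rb); auto; lra|].
      fold E; apply Rmult_le_compat_l; [exact HE|apply Hall]. }
    pose proof (Hall (k - 1)%Z); pose proof (Hall (k + 1)%Z).
    assert (Hlap : lambda * ((u t' (k - 1)%Z - v t' (k - 1)%Z) - 2 * (u t' k - v t' k)
                             + (u t' (k + 1)%Z - v t' (k + 1)%Z)) <= lambda * (2 * c))
      by (apply Rmult_le_compat_l; lra).
    nra.
Qed.

Lemma is_solution_shift a u h : 0 < h -> is_solution s0 tau eta lambda I0 a u ->
  is_solution s0 tau eta lambda I0 (u h) (fun t => u (t + h)).
Proof.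
  intros Hh [Hinit [Hrc [Hder Hbd]]]; split; [|split; [|split]].
  - intros j; now rewrite Rplus_0_l.
  - intros j eps Heps.
    assert (Hcont : continuity_pt (fun s => u s j) h)
      by (apply derivable_continuous_pt; eexists; now apply Hder).
    destruct (continuity_pt_eps _ _ Hcont eps Heps) as [d [Hd Hclose]].
    exists d; split; [exact Hd|]; intros t Ht; apply Hclose.
    replace (t + h - h) with t by ring; rewrite Rabs_pos_eq; lra.
  - intros j t Ht; apply (derivable_pt_lim_shift (fun s => u s j)), Hder; lra.
  - intros T HT; destruct (Hbd (T + h)) as [Mb HMb]; [lra|].
    exists Mb; intros t j Ht; apply HMb; lra.
Qed.

Lemma solution_nondecreasing a u : is_solution s0 tau eta lambda I0 a u ->
  (forall h j, 0 < h -> a j <= u h j) -> forall j t s, 0 <= t <= s -> u t j <= u s j.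
Proof.
  intros Hu Hinc j t s Hts.
  destruct (Req_dec t s) as [<-|Hneq]; [lra|].
  replace s with (t + (s - t)) by ring.
  apply (solution_comparison a (u (s - t)) u (fun x => u (x + (s - t)))); [exact Hu| | |lra].
  - apply (is_solution_shift a); [lra|exact Hu].
  - intros k; apply Hinc; lra.
Qed.

Lemma solution_nonincreasing a u : is_solution s0 tau eta lambda I0 a u ->
  (forall h j, 0 < h -> u h j <= a j) -> forall j t s, 0 <= t <= s -> u s j <= u t j.
Proof.
  intros Hu Hdec j t s Hts.
  destruct (Req_dec t s) as [<-|Hneq]; [lra|].
  replace s with (t + (s - t)) by ring.
  apply (solution_comparison (u (s - t)) a (fun x => u (x + (s - t))) u); [|exact Hu| |lra].
  - apply (is_solution_shift a); [lra|exact Hu].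
  - intros k; apply Hdec; lra.
Qed.

End LatticeSolutions.

Lemma nondecreasing_converges (phi : R -> R) M :
  (forall t s, 0 <= t <= s -> phi t <= phi s) -> (forall t, 0 <= t -> phi t <= M) ->
  exists l, forall eps, 0 < eps -> exists T, forall t, T <= t -> Rabs (phi t - l) < eps.
Proof.
  intros Hmono Hbound.
  set (E := fun x => exists t, 0 <= t /\ x = phi t).
  destruct (completeness E) as [l [Hub Hlub]].
  { exists M; intros x [t [Ht ->]]; now apply Hbound. }
  { exists (phi 0), 0; split; [lra|reflexivity]. }
  exists l; intros eps Heps.
  assert (Hnear : exists t, 0 <= t /\ l - eps < phi t).
  { apply NNPP; intros Hnone.
    assert (is_upper_bound E (l - eps)).
    { intros x [t [Ht ->]]; destruct (Rle_dec (phi t) (l - eps)) as [Hle|Hgt]; [exact Hle|].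
      exfalso; apply Hnone; exists t; split; [exact Ht|lra]. }
    specialize (Hlub _ H); lra. }
  destruct Hnear as [t0 [Ht0 Hphi0]]; exists t0; intros t Ht.
  assert (phi t <= l) by (apply Hub; exists t; split; [lra|reflexivity]).
  pose proof (Hmono t0 t ltac:(lra)); apply Rabs_def1; lra.
Qed.

Lemma nonincreasing_converges (phi : R -> R) m :
  (forall t s, 0 <= t <= s -> phi s <= phi t) -> (forall t, 0 <= t -> m <= phi t) ->
  exists l, forall eps, 0 < eps -> exists T, forall t, T <= t -> Rabs (phi t - l) < eps.
Proof.
  intros Hmono Hbound.
  destruct (nondecreasing_converges (fun t => - phi t) (- m)) as [l Hl].
  - intros t s Hts; specialize (Hmono t s Hts); lra.
  - intros t Ht; specialize (Hbound t Ht); lra.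
  - exists (- l); intros eps Heps; destruct (Hl eps Heps) as [T HT]; exists T.
    intros t Ht; specialize (HT t Ht).
    replace (phi t - - l) with (- (- phi t - l)) by ring; now rewrite Rabs_Ropp.
Qed.

Definition converges_pointwise (u : R -> Z -> R) (l : Z -> R) : Prop :=
  forall j eps, 0 < eps -> exists T, forall t, T <= t -> Rabs (u t j - l j) < eps.

Lemma monotone_bounded_converges (u : R -> Z -> R) M :
  (forall t j, 0 <= t -> 0 <= u t j <= M) ->
  (forall j t s, 0 <= t <= s -> u t j <= u s j) \/
  (forall j t s, 0 <= t <= s -> u s j <= u t j) ->
  exists l, converges_pointwise u l.
Proof.
  intros Hbox Hmono; unfold converges_pointwise.
  apply (functional_choice (fun (j : Z) (l : R) => forall eps, 0 < eps ->
           exists T, forall t, T <= t -> Rabs (u t j - l) < eps)); intros j.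
  destruct Hmono as [Hup|Hdown].
  - apply (nondecreasing_converges _ M); [apply Hup|intros t Ht; apply Hbox, Ht].
  - apply (nonincreasing_converges _ 0); [apply Hdown|intros t Ht; apply Hbox, Ht].
Qed.

Lemma converges_pointwise_bounds (u : R -> Z -> R) l m M :
  converges_pointwise u l -> (forall t j, 0 <= t -> m <= u t j <= M) ->
  forall j, m <= l j <= M.
Proof.
  intros Hl Hbox j; split; apply Rle_plus_epsilon; intros eps Heps;
    destruct (Hl j eps Heps) as [T HT];
    specialize (HT (Rmax T 0) (Rmax_l T 0)); apply Rabs_def2 in HT;
    specialize (Hbox (Rmax T 0) j (Rmax_r T 0)); lra.
Qed.

Section Stationary.

Variables (s0 tau eta lambda : R) (I0 : Z -> R).

(* Mean value theorem on [[T, T + 1]]: the increment of [u] tends to [0], while the slope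
   [rhs (u c)] tends to [rhs l]. *)
Lemma solution_limit_is_stationary a u l :
  0 <= s0 -> 0 <= tau -> 0 <= eta -> 0 <= lambda ->
  is_solution s0 tau eta lambda I0 a u -> (forall t j, 0 <= t -> 0 <= u t j) ->
  (forall j, 0 <= l j) -> converges_pointwise u l ->
  forall j, rhs s0 tau eta lambda I0 l j = 0.
Proof.
  intros Hs0 Htau Heta Hlam [_ [_ [Hder _]]] Hpos Hlpos Hl j.
  set (C := s0 * tau + eta + 4 * lambda).
  assert (HC : 0 <= C) by (unfold C; pose proof (Rmult_le_pos s0 tau Hs0 Htau); lra).
  apply Rabs_eq_0, Rle_antisym; [|apply Rabs_pos].
  apply Rle_plus_epsilon; intros eps Heps; rewrite Rplus_0_l.
  set (d := eps / (C + 2)).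
  assert (Hd : 0 < d) by (apply Rdiv_lt_0_compat; lra).
  destruct (Hl (j - 1)%Z d Hd) as [T1 HT1].
  destruct (Hl j d Hd) as [T2 HT2].
  destruct (Hl (j + 1)%Z d Hd) as [T3 HT3].
  set (T := Rmax (Rmax T1 T2) (Rmax T3 0) + 1).
  assert (HT : T1 <= T /\ T2 <= T /\ T3 <= T /\ 0 < T).
  { unfold T; pose proof (Rmax_l (Rmax T1 T2) (Rmax T3 0));
      pose proof (Rmax_r (Rmax T1 T2) (Rmax T3 0)); pose proof (Rmax_l T1 T2);
      pose proof (Rmax_r T1 T2); pose proof (Rmax_l T3 0); pose proof (Rmax_r T3 0); lra. }
  destruct (mean_value_open (fun s => u s j) (fun s => rhs s0 tau eta lambda I0 (u s) j)
              T (T + 1)) as [c [Hc Hmvt]]; [lra| | |].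
  - intros c Hc; apply derivable_continuous_pt; eexists; apply Hder; lra.
  - intros c Hc; apply Hder; lra.
  - replace (T + 1 - T) with 1 in Hmvt by ring; rewrite Rmult_1_r in Hmvt.
    assert (Hincr : Rabs (u (T + 1) j - u T j) <= 2 * d).
    { pose proof (HT2 (T + 1) ltac:(lra)); pose proof (HT2 T ltac:(lra)).
      replace (u (T + 1) j - u T j) with ((u (T + 1) j - l j) - (u T j - l j)) by ring.
      eapply Rle_trans; [apply Rabs_triang|]; rewrite Rabs_Ropp; lra. }
    assert (Hslope : Rabs (rhs s0 tau eta lambda I0 (u c) j - rhs s0 tau eta lambda I0 l j)
                     <= C * d).
    { apply rhs_lipschitz_at; auto; [apply Hpos; lra| | |]; left;
        [apply HT1|apply HT2|apply HT3]; lra. }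
    rewrite <- Hmvt in Hslope.
    apply Rle_trans with (C * d + 2 * d).
    + pose proof (Rabs_triang_inv (rhs s0 tau eta lambda I0 l j) (u (T + 1) j - u T j)).
      rewrite Rabs_minus_sym in Hslope; lra.
    + unfold d; apply Req_le; field; lra.
Qed.

Lemma stationary_zero_spreads (l : Z -> R) k :
  0 < lambda -> (forall j, 0 <= I0 j) -> (forall j, 0 <= l j) ->
  rhs s0 tau eta lambda I0 l k = 0 -> l k = 0 ->
  l (k - 1)%Z = 0 /\ l (k + 1)%Z = 0 /\ I0 k = 0.
Proof.
  intros Hlam HI0 Hl Hrhs Hk; unfold rhs, dlap in Hrhs; rewrite Hk, freact_0 in Hrhs.
  pose proof (HI0 k); pose proof (Hl (k - 1)%Z); pose proof (Hl (k + 1)%Z).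
  assert (0 <= lambda * l (k - 1)%Z) by (apply Rmult_le_pos; lra).
  assert (0 <= lambda * l (k + 1)%Z) by (apply Rmult_le_pos; lra).
  assert (lambda * l (k - 1)%Z = 0) by lra; assert (lambda * l (k + 1)%Z = 0) by lra.
  split; [|split]; [nra|nra|lra].
Qed.

(* Strong maximum principle: a zero of [l] spreads to all of [Z], including the support
   of [I0]. *)
Lemma stationary_nonneg_pos (l : Z -> R) :
  0 < lambda -> (forall j, 0 <= I0 j) -> (exists j, 0 < I0 j) ->
  (forall j, 0 <= l j) -> (forall j, rhs s0 tau eta lambda I0 l j = 0) ->
  forall j, 0 < l j.
Proof.
  intros Hlam HI0 [j0 Hj0] Hl Hrhs j.
  destruct (Rlt_dec 0 (l j)) as [Hpos|Hnpos]; [exact Hpos|exfalso].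
  assert (Hzero : forall n : nat, l (j + Z.of_nat n)%Z = 0 /\ l (j - Z.of_nat n)%Z = 0).
  { induction n as [|n [IHr IHl]].
    - rewrite Z.add_0_r, Z.sub_0_r; pose proof (Hl j); split; lra.
    - rewrite Nat2Z.inj_succ; split.
      + replace (j + Z.succ (Z.of_nat n))%Z with ((j + Z.of_nat n) + 1)%Z by lia.
        now apply (stationary_zero_spreads l).
      + replace (j - Z.succ (Z.of_nat n))%Z with ((j - Z.of_nat n) - 1)%Z by lia.
        now apply (stationary_zero_spreads l). }
  assert (Hj0z : l j0 = 0).
  { destruct (Z_le_dec j j0).
    - replace j0 with (j + Z.of_nat (Z.to_nat (j0 - j)))%Z by lia; apply Hzero.
    - replace j0 with (j - Z.of_nat (Z.to_nat (j - j0)))%Z by lia; apply Hzero. }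
  destruct (stationary_zero_spreads l j0 Hlam HI0 Hl (Hrhs j0) Hj0z) as [_ [_ HI0j0]]; lra.
Qed.

End Stationary.

Lemma monotone_solution_converges_to_stationary s0 tau eta lambda I0 Iinf a u M :
  0 <= s0 -> 0 <= tau -> 0 <= eta -> 0 < lambda ->
  (forall j, 0 <= I0 j) -> (exists j, 0 < I0 j) ->
  (forall v, pos_bdd_stationary s0 tau eta lambda I0 v -> v = Iinf) ->
  is_solution s0 tau eta lambda I0 a u -> (forall t j, 0 <= t -> 0 <= u t j <= M) ->
  (forall j t s, 0 <= t <= s -> u t j <= u s j) \/
  (forall j t s, 0 <= t <= s -> u s j <= u t j) ->
  converges_pointwise u Iinf.
Proof.
  intros Hs0 Htau Heta Hlam HI0 HI0pos Huniq Hu Hbox Hmono.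
  destruct (monotone_bounded_converges u M Hbox Hmono) as [l Hl].
  pose proof (converges_pointwise_bounds u l 0 M Hl Hbox) as Hlbox.
  assert (Hstat : forall j, rhs s0 tau eta lambda I0 l j = 0).
  { apply (solution_limit_is_stationary s0 tau eta lambda I0 a u); auto; try lra.
    - intros t j Ht; apply Hbox, Ht.
    - intros j; apply Hlbox. }
  replace Iinf with l; [exact Hl|]; apply Huniq; split; [|split; [|exact Hstat]].
  - apply (stationary_nonneg_pos s0 tau eta lambda I0); auto; intros j; apply Hlbox.
  - exists M; intros j; specialize (Hlbox j); rewrite Rabs_pos_eq; lra.
Qed.

Lemma converges_pointwise_squeeze (lo w hi : R -> Z -> R) l :
  (forall t j, 0 <= t -> lo t j <= w t j <= hi t j) ->
  converges_pointwise lo l -> converges_pointwise hi l -> converges_pointwise w l.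
Proof.
  intros Hsq Hlo Hhi j eps Heps.
  destruct (Hlo j eps Heps) as [T1 HT1]; destruct (Hhi j eps Heps) as [T2 HT2].
  exists (Rmax (Rmax T1 T2) 0); intros t Ht.
  pose proof (Rmax_l (Rmax T1 T2) 0); pose proof (Rmax_r (Rmax T1 T2) 0).
  pose proof (Rmax_l T1 T2); pose proof (Rmax_r T1 T2).
  specialize (HT1 t ltac:(lra)); specialize (HT2 t ltac:(lra)).
  specialize (Hsq t j ltac:(lra)).
  apply Rabs_def2 in HT1; apply Rabs_def2 in HT2; apply Rabs_def1; lra.
Qed.

Lemma converges_locally_uniformly (w : R -> Z -> R) l : converges_pointwise w l ->
  forall N eps, 0 < eps ->
    exists T, forall t j, T <= t -> (Z.abs j <= N)%Z -> Rabs (w t j - l j) < eps.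
Proof.
  intros Hl N eps Heps.
  assert (Hball : forall n : nat, exists T, forall t j, T <= t ->
                    (Z.abs j <= Z.of_nat n)%Z -> Rabs (w t j - l j) < eps).
  { induction n as [|n [T IH]].
    - destruct (Hl 0%Z eps Heps) as [T HT]; exists T; intros t j Ht Hj.
      replace j with 0%Z by lia; now apply HT.
    - destruct (Hl (Z.of_nat (S n)) eps Heps) as [Tr HTr].
      destruct (Hl (- Z.of_nat (S n))%Z eps Heps) as [Tl HTl].
      exists (Rmax T (Rmax Tr Tl)); intros t j Ht Hj.
      pose proof (Rmax_l T (Rmax Tr Tl)); pose proof (Rmax_r T (Rmax Tr Tl)).
      pose proof (Rmax_l Tr Tl); pose proof (Rmax_r Tr Tl).
      destruct (Z_le_dec (Z.abs j) (Z.of_nat n)) as [Hjn|Hjn]; [apply IH; [lra|exact Hjn]|].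
      assert (j = Z.of_nat (S n) \/ j = (- Z.of_nat (S n))%Z) as [->| ->] by lia;
        [apply HTr|apply HTl]; lra. }
  destruct (Hball (Z.to_nat N)) as [T HT]; exists T; intros t j Ht Hj; apply HT; [exact Ht|lia].
Qed.

Lemma exists_invariant_box s0 eta (u0 : Z -> R) : 0 <= s0 -> 0 < eta ->
  (forall j, 0 <= u0 j) -> bounded_seq u0 ->
  exists M, 0 <= M /\ s0 + 1 <= eta * M /\ forall j, 0 <= u0 j <= M.
Proof.
  intros Hs0 Heta Hu0 [Mb HMb].
  assert (Hq : 0 <= (s0 + 1) / eta) by (apply Rdiv_le_0_compat; lra).
  exists (Rabs Mb + (s0 + 1) / eta); split; [|split].
  - pose proof (Rabs_pos Mb); lra.
  - rewrite Rmult_plus_distr_l.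
    replace (eta * ((s0 + 1) / eta)) with (s0 + 1) by (field; lra).
    pose proof (Rmult_le_pos eta (Rabs Mb) ltac:(lra) (Rabs_pos Mb)); lra.
  - intros j; pose proof (HMb j); pose proof (Rle_abs (u0 j)); pose proof (Rle_abs Mb).
    split; [apply Hu0|lra].
Qed.

Theorem theorem2 (s0 tau eta lambda : R) (I0 Iinf u0 : Z -> R)
    (I : R -> Z -> R) :
  0 < s0 < 1 -> 0 < tau -> 0 < eta -> 0 < lambda ->
  finitely_supported I0 ->
  (forall j, 0 <= I0 j < 1) ->
  (exists j, 0 < I0 j) ->
  pos_bdd_stationary s0 tau eta lambda I0 Iinf ->
  (forall v, pos_bdd_stationary s0 tau eta lambda I0 v -> v = Iinf) ->
  (forall j, 0 <= u0 j) -> bounded_seq u0 -> finitely_supported u0 ->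
  is_solution s0 tau eta lambda I0 u0 I ->
  forall N : Z, forall eps, 0 < eps ->
    exists T, forall t j, T <= t -> (Z.abs j <= N)%Z ->
      Rabs (I t j - Iinf j) < eps.
Proof.
  intros [Hs0 _] Htau Heta Hlam _ HI0 HI0pos _ Huniq Hu0 Hbdd _ HI N eps Heps.
  assert (HI01 : forall j, 0 <= I0 j <= 1) by (intros j; specialize (HI0 j); lra).
  assert (Hnonneg : 0 <= s0 /\ 0 <= tau /\ 0 <= eta /\ 0 <= lambda) by lra.
  destruct Hnonneg as [Hs0' [Htau' [Heta' Hlam']]].
  destruct (exists_invariant_box s0 eta u0 Hs0' Heta Hu0 Hbdd) as [M [HM [HsM Hu0M]]].
  destruct (solution_in_box s0 tau eta lambda I0 M (fun _ => 0) Hs0' Htau' Heta' Hlam'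
              HI01 HM HsM (fun _ => conj (Rle_refl 0) HM)) as [U [HU HUbox]].
  destruct (solution_in_box s0 tau eta lambda I0 M (fun _ => M) Hs0' Htau' Heta' Hlam'
              HI01 HM HsM (fun _ => conj HM (Rle_refl M))) as [V [HV HVbox]].
  apply (converges_locally_uniformly I); [|exact Heps].
  apply (converges_pointwise_squeeze U I V).
  - intros t j Ht; split.
    + apply (solution_comparison s0 tau eta lambda I0 Hs0' Htau' Heta' Hlam' _ _ U I HU HI);
        [intros k; apply Hu0M|exact Ht].
    + apply (solution_comparison s0 tau eta lambda I0 Hs0' Htau' Heta' Hlam' _ _ I V HI HV);
        [intros k; apply Hu0M|exact Ht].
  - apply (monotone_solution_converges_to_stationary s0 tau eta lambda I0 Iinf
             (fun _ => 0) U M);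
      auto; [intros j; apply HI01|left].
    apply (solution_nondecreasing s0 tau eta lambda I0 Hs0' Htau' Heta' Hlam' _ U HU).
    intros h j Hh; apply HUbox; lra.
  - apply (monotone_solution_converges_to_stationary s0 tau eta lambda I0 Iinf
             (fun _ => M) V M);
      auto; [intros j; apply HI01|right].
    apply (solution_nonincreasing s0 tau eta lambda I0 Hs0' Htau' Heta' Hlam' _ V HV).
    intros h j Hh; apply HVbox; lra.
Qed.
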